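(* Let $p \geq 5$ and let $L$ be the Laplacian of the graph $C_\infty \oplus K_p \oplus C_\infty$. Let $E_K \subset l^2$ be the span of the vectors $e_{-1}-e_{-k}$, $k=2,\ldots,p-2$ (equivalently, the $v \in l^2$ supported on $\{-p+2,\ldots,-1\}$ with entries summing to $0$), and $E_K^\perp$ its orthogonal complement. For $\lambda > 4$ let $\sigma_+ = \sigma_+(\lambda) = \tfrac12[(2-\lambda)+\sqrt{(2-\lambda)^2-4}]$ and $$F_S(\lambda) = (2-\lambda)\sigma_+ - (p-1-\lambda)(2-\lambda) + 2(p-2), \qquad F_A(\lambda) = \sigma_+ - (p+1-\lambda).$$ Then: (i) every eigenvector $v \in l^2 \cap E_K^\perp$ of $L$ with eigenvalue $\lambda > 4$ is either symmetric or antisymmetric; (ii) $\lambda > 4$ is the eigenvalue of a symmetric eigenvector $v \in l^2 \cap E_K^\perp$ of $L$ if and only if $F_S(\lambda) = 0$; (iii) $\lambda > 4$ is the eigenvalue of an antisymmetric eigenvector $v \in l^2 \cap E_K^\perp$ of $L$ if and only if $F_A(\lambda)=0$; (iv) each of the equations $F_A(\lambda)=0$ and $F_S(\lambda)=0$ has exactly one solution in $(p,p+2)$ and no solutions in $(4,p] \cup [p+2,+\infty)$.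
   Context: The graph $C_\infty \oplus K_p \oplus C_\infty$ has vertex set $\mathbb{Z}$; its edges are every pair of distinct vertices in $\{-p+1,\ldots,0\}$, the edges $\{j,j+1\}$ for all $j \leq -p$, and the edges $\{j,j+1\}$ for all $j \geq 0$. $l^2$ is the real Hilbert space of square-summable real sequences indexed by $\mathbb{Z}$, with the standard inner product; $e_j$ is the indicator vector of $j$. The Laplacian acts by $(Lv)_i = \deg(i)\, v_i - \sum_{j \sim i} v_j$. A vector $v$ is symmetric if $v_{-p+1-n} = v_n$ for all integers $n \geq 0$, and antisymmetric if $v_{-p+1-n} = -v_n$ for all integers $n \geq 0$ (i.e. invariant, resp. anti-invariant, under the reflection $j \mapsto -p+1-j$ of the graph). *)

From Stdlib Require Import Reals Lra Lia ZArith List.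
From Coquelicot Require Import Coquelicot.
Import ListNotations.
Open Scope R_scope.

Definition vec := Z -> R.

(* Graph C_oo (+) K_p (+) C_oo on vertex set Z. *)
Definition adj (p : nat) (i j : Z) : bool :=
  let P := Z.of_nat p in
  negb (Z.eqb i j) &&
  ( ((-P + 1 <=? i)%Z && (i <=? 0)%Z && (-P + 1 <=? j)%Z && (j <=? 0)%Z)
  || ((Z.eqb (Z.abs (i - j)) 1) && (Z.min i j <=? -P)%Z)
  || ((Z.eqb (Z.abs (i - j)) 1) && (0 <=? Z.min i j)%Z) ).

(* All neighbours of i lie in the window [i-p, i+p]. *)
Definition window (p : nat) (i : Z) : list Z :=
  map (fun k => (i - Z.of_nat p + Z.of_nat k)%Z) (seq 0 (2 * p + 1)).

Definition deg (p : nat) (i : Z) : nat := length (filter (adj p i) (window p i)).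

Definition nbsum (p : nat) (v : vec) (i : Z) : R :=
  fold_right Rplus 0 (map (fun j => if adj p i j then v j else 0) (window p i)).

Definition Lap (p : nat) (v : vec) (i : Z) : R := INR (deg p i) * v i - nbsum p v i.

Definition in_l2 (v : vec) : Prop :=
  ex_series (fun n : nat => (v (Z.of_nat n))^2) /\
  ex_series (fun n : nat => (v (- Z.of_nat n - 1)%Z)^2).

Definition ip (u v : vec) : R :=
  Series (fun n : nat => u (Z.of_nat n) * v (Z.of_nat n)) +
  Series (fun n : nat => u (- Z.of_nat n - 1)%Z * v (- Z.of_nat n - 1)%Z).

Definition e (j : Z) : vec := fun i => if Z.eqb i j then 1 else 0.

Definition EK (p : nat) (w : vec) : Prop :=
  exists c : nat -> R, forall j : Z,
    w j = fold_right Rplus 0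
            (map (fun k => c k * (e (-1)%Z j - e (- Z.of_nat k)%Z j)) (seq 2 (p - 3))).

Definition in_EKperp (p : nat) (v : vec) : Prop :=
  in_l2 v /\ forall w, EK p w -> ip v w = 0.

Definition is_eigvec (p : nat) (v : vec) (lam : R) : Prop :=
  in_l2 v /\ (exists i, v i <> 0) /\ forall i, Lap p v i = lam * v i.

Definition symmetric (p : nat) (v : vec) : Prop :=
  forall n : Z, (0 <= n)%Z -> v (- Z.of_nat p + 1 - n)%Z = v n.

Definition antisymmetric (p : nat) (v : vec) : Prop :=
  forall n : Z, (0 <= n)%Z -> v (- Z.of_nat p + 1 - n)%Z = - v n.

Definition sigma_plus (lam : R) : R := ((2 - lam) + sqrt ((2 - lam)^2 - 4)) / 2.

Definition F_S (p : nat) (lam : R) : R :=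
  (2 - lam) * sigma_plus lam - (INR p - 1 - lam) * (2 - lam) + 2 * (INR p - 2).

Definition F_A (p : nat) (lam : R) : R := sigma_plus lam - (INR p + 1 - lam).

(* An l^2 eigenvector v with eigenvalue lam > 4 satisfies v_(n+1) = (2 - lam) v_n - v_(n-1) along
   each of the two infinite paths, and square summability leaves only the decaying solution,
   geometric with ratio sigma_+(lam), the root of s^2 - (2 - lam) s + 1 in (-1, 0).
   Orthogonality to E_K makes v constant on the inner clique vertices -p+2, ..., -1, so v is
   determined by a = v_0, b = v_(-p+1) and c = v_(-1), which satisfy the three eigenvalue
   equations at the clique.  Their difference and sum give (a - b) F_A = 0, c F_S = 0 and
   (2 - lam) c = a + b.  As F_A and F_S have no common root, v is symmetric (a = b) unless
   F_A = 0, and antisymmetric (c = 0, b = -a) when F_A = 0; conversely a root of F_S or F_A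
   gives a solution of the clique equations, hence an eigenvector.  Finally F_A = 0 is solved
   explicitly, lam = p + 1 + 1/(p - 1), while F_S / (2 - lam) is strictly increasing, negative
   at p and positive at p + 2. *)

From Stdlib Require Import Reals Lra Lia ZArith List.
From Coquelicot Require Import Coquelicot.
Open Scope R_scope.

Definition sumL {A : Type} (l : list A) (f : A -> R) : R := fold_right Rplus 0 (map f l).

Lemma sumL_ext_in {A : Type} (l : list A) f g :
  (forall j, In j l -> f j = g j) -> sumL l f = sumL l g.
Proof.
  intros Hfg. unfold sumL. f_equal. apply map_ext_in. exact Hfg.
Qed.

Lemma sumL_app {A : Type} (l1 l2 : list A) f : sumL (l1 ++ l2) f = sumL l1 f + sumL l2 f.
Proof. unfold sumL. induction l1 as [|x l1 IH]; simpl; [lra|]. rewrite IH; lra. Qed.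

Lemma sumL_plus {A : Type} (l : list A) f g : sumL l (fun j => f j + g j) = sumL l f + sumL l g.
Proof. unfold sumL. induction l as [|x l IH]; simpl; [lra|]. rewrite IH; lra. Qed.

Lemma sumL_const {A : Type} (l : list A) x : sumL l (fun _ => x) = INR (length l) * x.
Proof.
  unfold sumL. induction l as [|y l IH]; cbn [length map fold_right]; [simpl; lra|].
  rewrite IH, S_INR; lra.
Qed.

Lemma sumL_zero {A : Type} (l : list A) f : (forall j, In j l -> f j = 0) -> sumL l f = 0.
Proof. intros Hf. rewrite (sumL_ext_in l f (fun _ => 0)), sumL_const by exact Hf. lra. Qed.

Lemma sumL_filter {A : Type} (P : A -> bool) (l : list A) x (f : A -> R) :
  INR (length (filter P l)) * x - fold_right Rplus 0 (map (fun j => if P j then f j else 0) l)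
  = sumL l (fun j => if P j then x - f j else 0).
Proof.
  unfold sumL. induction l as [|a l IH]; simpl; [lra|].
  destruct (P a); cbn [length]; [rewrite S_INR|]; rewrite <- IH; lra.
Qed.

Definition zrange (a : Z) (n : nat) : list Z := map (fun k => (a + Z.of_nat k)%Z) (seq 0 n).

Lemma in_zrange a n j : In j (zrange a n) <-> (a <= j < a + Z.of_nat n)%Z.
Proof.
  unfold zrange. rewrite in_map_iff. split.
  - intros [k [<- Hk]]. apply in_seq in Hk. lia.
  - intros Hj. exists (Z.to_nat (j - a)). split; [lia|]. apply in_seq. lia.
Qed.

Lemma zrange_S a n : zrange a (S n) = a :: zrange (a + 1) n.
Proof.
  unfold zrange. cbn [seq map]. f_equal; [lia|].
  rewrite <- seq_shift, map_map. apply map_ext. intros k. lia.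
Qed.

Lemma zrange_add a n m : zrange a (n + m) = zrange a n ++ zrange (a + Z.of_nat n) m.
Proof.
  revert a. induction n as [|n IH]; intros a.
  - simpl. rewrite Z.add_0_r. reflexivity.
  - rewrite Nat.add_succ_l, !zrange_S, IH. simpl. do 3 f_equal. lia.
Qed.

Definition boxcar (lo hi : Z) (x : R) (j : Z) : R :=
  if ((lo <=? j)%Z && (j <=? hi)%Z)%bool then x else 0.

Lemma sum_zrange_boxcar a n lo hi x :
  (a <= lo <= hi + 1)%Z -> (hi + 1 <= a + Z.of_nat n)%Z ->
  sumL (zrange a n) (boxcar lo hi x) = IZR (hi - lo + 1) * x.
Proof.
  intros Hlo Hhi.
  set (n1 := Z.to_nat (lo - a)). set (n2 := Z.to_nat (hi - lo + 1)).
  replace n with (n1 + (n2 + (n - n1 - n2)))%nat by lia.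
  rewrite !zrange_add, !sumL_app.
  rewrite (sumL_zero (zrange a _)), (sumL_zero (zrange (_ + _) (_ - _ - _))).
  2, 3: intros j Hj; apply in_zrange in Hj; unfold boxcar;
        destruct (Z.leb_spec lo j), (Z.leb_spec j hi); simpl; reflexivity || lia.
  rewrite (sumL_ext_in _ _ (fun _ => x)), sumL_const.
  - unfold zrange. rewrite length_map, length_seq, INR_IZR_INZ. unfold n2.
    rewrite Z2Nat.id by lia. lra.
  - intros j Hj. apply in_zrange in Hj. unfold boxcar.
    destruct (Z.leb_spec lo j), (Z.leb_spec j hi); simpl; reflexivity || lia.
Qed.

Lemma sum_zrange_boxcar1 a n b x :
  (a <= b < a + Z.of_nat n)%Z -> sumL (zrange a n) (boxcar b b x) = x.
Proof. intros Hb. rewrite sum_zrange_boxcar by lia. rewrite Z.sub_diag. simpl. lra. Qed.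

Lemma Lap_sum p v i :
  Lap p v i = sumL (window p i) (fun j => if adj p i j then v i - v j else 0).
Proof. apply sumL_filter. Qed.

Lemma window_zrange p i : window p i = zrange (i - Z.of_nat p) (2 * p + 1).
Proof. reflexivity. Qed.

(* Decides every comparison in [adj] and [boxcar]; in the surviving branches [j] is one
   specific vertex, identified by [lia]. *)
Ltac adj_cases j :=
  repeat (match goal with
          | |- context [Z.eqb ?x ?y] => destruct (Z.eqb_spec x y)
          | |- context [Z.leb ?x ?y] => destruct (Z.leb_spec x y)
          end; simpl; try (exfalso; lia));
  try lra; try (subst; lra);
  try (match goal with |- context [?f ?k] => replace j with k by lia; lra end).

Lemma Lap_path p v i : (1 <= p)%nat -> (1 <= i \/ i <= - Z.of_nat p)%Z ->
  Lap p v i = (v i - v (i - 1)%Z) + (v i - v (i + 1)%Z).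
Proof.
  intros Hp Hi. rewrite Lap_sum, window_zrange.
  rewrite (sumL_ext_in _ _ (fun j => boxcar (i - 1) (i - 1) (v i - v (i - 1)%Z) j
                                  + boxcar (i + 1) (i + 1) (v i - v (i + 1)%Z) j)).
  - rewrite sumL_plus, !sum_zrange_boxcar1 by lia. reflexivity.
  - intros j _. unfold adj, boxcar. adj_cases j.
Qed.

Lemma IZR_clique_inner_size p : IZR (-1 - (- Z.of_nat p + 2) + 1) = INR p - 2.
Proof.
  replace (-1 - (- Z.of_nat p + 2) + 1)%Z with (Z.of_nat p - 2)%Z by lia.
  rewrite minus_IZR, <- INR_IZR_INZ. reflexivity.
Qed.

Section Clique.

Variables (p : nat) (v : vec) (c : R).
Hypothesis p_ge2 : (2 <= p)%nat.
Hypothesis v_inner : forall j, (- Z.of_nat p + 2 <= j <= -1)%Z -> v j = c.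

Lemma Lap_clique_right :
  Lap p v 0 = (v 0%Z - v 1%Z) + (v 0%Z - v (- Z.of_nat p + 1)%Z) + (INR p - 2) * (v 0%Z - c).
Proof.
  rewrite Lap_sum, window_zrange.
  rewrite (sumL_ext_in _ _ (fun j => boxcar 1 1 (v 0%Z - v 1%Z) j
     + boxcar (- Z.of_nat p + 1) (- Z.of_nat p + 1) (v 0%Z - v (- Z.of_nat p + 1)%Z) j
     + boxcar (- Z.of_nat p + 2) (-1) (v 0%Z - c) j)).
  - rewrite !sumL_plus, !sum_zrange_boxcar1, sum_zrange_boxcar, (IZR_clique_inner_size p) by lia.
    reflexivity.
  - intros j _. unfold adj, boxcar. adj_cases j. all: rewrite (v_inner j) by lia; lra.
Qed.

Lemma Lap_clique_left :
  Lap p v (- Z.of_nat p + 1) =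
    (v (- Z.of_nat p + 1)%Z - v (- Z.of_nat p)%Z) + (v (- Z.of_nat p + 1)%Z - v 0%Z)
    + (INR p - 2) * (v (- Z.of_nat p + 1)%Z - c).
Proof.
  rewrite Lap_sum, window_zrange.
  rewrite (sumL_ext_in _ _ (fun j =>
       boxcar (- Z.of_nat p) (- Z.of_nat p) (v (- Z.of_nat p + 1)%Z - v (- Z.of_nat p)%Z) j
     + boxcar 0 0 (v (- Z.of_nat p + 1)%Z - v 0%Z) j
     + boxcar (- Z.of_nat p + 2) (-1) (v (- Z.of_nat p + 1)%Z - c) j)).
  - rewrite !sumL_plus, !sum_zrange_boxcar1, sum_zrange_boxcar, (IZR_clique_inner_size p) by lia.
    reflexivity.
  - intros j _. unfold adj, boxcar. adj_cases j. all: rewrite (v_inner j) by lia; lra.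
Qed.

Lemma Lap_clique_inner i : (- Z.of_nat p + 2 <= i <= -1)%Z ->
  Lap p v i = (c - v 0%Z) + (c - v (- Z.of_nat p + 1)%Z).
Proof.
  intros Hi. rewrite Lap_sum, window_zrange.
  rewrite (sumL_ext_in _ _ (fun j => boxcar 0 0 (c - v 0%Z) j
     + boxcar (- Z.of_nat p + 1) (- Z.of_nat p + 1) (c - v (- Z.of_nat p + 1)%Z) j)).
  - rewrite sumL_plus, !sum_zrange_boxcar1 by lia. reflexivity.
  - intros j _. rewrite (v_inner i) by lia. unfold adj, boxcar. adj_cases j.
    all: rewrite (v_inner j) by lia; lra.
Qed.

End Clique.

Lemma sum_n_delta m r n :
  sum_n (fun k => if Nat.eqb k m then r else 0) n = if Nat.leb m n then r else 0.
Proof.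
  induction n as [|n IH].
  - rewrite sum_O. destruct m; reflexivity.
  - rewrite sum_Sn, IH.
    destruct (Nat.leb_spec m n), (Nat.leb_spec m (S n)), (Nat.eqb_spec (S n) m);
      unfold plus; simpl; first [exfalso; lia | lra].
Qed.

Lemma is_series_delta m r : is_series (fun k => if Nat.eqb k m then r else 0) r.
Proof.
  change (is_lim_seq (sum_n (fun k => if Nat.eqb k m then r else 0)) r).
  apply (is_lim_seq_ext_loc (fun _ => r)); [|apply is_lim_seq_const].
  exists m. intros n Hn. rewrite sum_n_delta. destruct (Nat.leb_spec m n); lia || reflexivity.
Qed.

Lemma is_series_0 : is_series (fun _ : nat => 0) 0.
Proof.
  apply (is_series_ext (fun n => if Nat.eqb n 0 then 0 else 0)); [|apply is_series_delta].
  intros n. destruct (Nat.eqb n 0); reflexivity.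
Qed.

Lemma mul_e_neg v k n : (1 <= k)%nat ->
  v (- Z.of_nat n - 1)%Z * e (- Z.of_nat k) (- Z.of_nat n - 1)%Z
  = if Nat.eqb n (k - 1) then v (- Z.of_nat k)%Z else 0.
Proof.
  intros Hk. unfold e.
  destruct (Z.eqb_spec (- Z.of_nat n - 1) (- Z.of_nat k)), (Nat.eqb_spec n (k - 1));
    try (exfalso; lia).
  - replace (- Z.of_nat n - 1)%Z with (- Z.of_nat k)%Z by lia. ring.
  - ring.
Qed.

Definition EK_comb (c : nat -> R) (L : list nat) (j : Z) : R :=
  sumL L (fun k => c k * (e (-1) j - e (- Z.of_nat k)%Z j)).

Lemma ip_ext u w w' : (forall j, w j = w' j) -> ip u w = ip u w'.
Proof. intros Hw. unfold ip. f_equal; apply Series_ext; intros n; rewrite Hw; reflexivity. Qed.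

Lemma is_series_neg_EK_comb v c L : (forall k, In k L -> (1 <= k)%nat) ->
  is_series (fun n => v (- Z.of_nat n - 1)%Z * EK_comb c L (- Z.of_nat n - 1)%Z)
    (sumL L (fun k => c k * (v (-1)%Z - v (- Z.of_nat k)%Z))).
Proof.
  induction L as [|k L IH]; intros HL; unfold sumL; simpl.
  - apply (is_series_ext (fun _ => 0)); [|apply is_series_0].
    intros n. unfold EK_comb, sumL. simpl. ring.
  - assert (Hk : (1 <= k)%nat) by (apply HL; left; reflexivity).
    pose proof (is_series_plus _ _ _ _
      (is_series_scal_l (c k) _ _
        (is_series_minus _ _ _ _ (is_series_delta 0 (v (-1)%Z))
                                 (is_series_delta (k - 1) (v (- Z.of_nat k)%Z))))
      (IH (fun m Hm => HL m (or_intror Hm)))) as Hsum.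
    eapply is_series_ext; [|exact Hsum]. intros n. cbv beta.
    pose proof (mul_e_neg v 1 n (le_n 1)) as E1. change (- Z.of_nat 1)%Z with (-1)%Z in E1.
    assert (Hn : v (- Z.of_nat n - 1)%Z * EK_comb c (k :: L) (- Z.of_nat n - 1)%Z
      = c k * (v (- Z.of_nat n - 1)%Z * e (-1) (- Z.of_nat n - 1)%Z
               - v (- Z.of_nat n - 1)%Z * e (- Z.of_nat k) (- Z.of_nat n - 1)%Z)
        + v (- Z.of_nat n - 1)%Z * EK_comb c L (- Z.of_nat n - 1)%Z)
      by (unfold EK_comb, sumL; simpl; ring).
    rewrite Hn, E1, (mul_e_neg v k n Hk). simpl (1 - 1)%nat.
    destruct (Nat.eqb n 0), (Nat.eqb n (k - 1));
      unfold plus, opp, scal; simpl; unfold mult; simpl; ring.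
Qed.

Lemma ip_EK_comb v c L : (forall k, In k L -> (1 <= k)%nat) ->
  ip v (EK_comb c L) = sumL L (fun k => c k * (v (-1)%Z - v (- Z.of_nat k)%Z)).
Proof.
  intros HL. unfold ip.
  rewrite (is_series_unique _ _ (is_series_neg_EK_comb v c L HL)).
  rewrite (is_series_unique (fun n => v (Z.of_nat n) * EK_comb c L (Z.of_nat n)) 0);
    [apply Rplus_0_l|].
  apply (is_series_ext (fun _ => 0)); [|apply is_series_0]. intros n.
  unfold EK_comb. rewrite sumL_zero, Rmult_0_r; [reflexivity|]. intros k Hk. specialize (HL k Hk).
  unfold e. destruct (Z.eqb_spec (Z.of_nat n) (-1)), (Z.eqb_spec (Z.of_nat n) (- Z.of_nat k));
    lia || ring.
Qed.

Lemma sumL_seq_delta (f : nat -> R) k s n : (s <= k < s + n)%nat ->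
  sumL (seq s n) (fun m => (if Nat.eqb m k then 1 else 0) * f m) = f k.
Proof.
  revert s. induction n as [|n IH]; intros s Hk; [lia|].
  change (sumL (seq s (S n)) ?g) with (g s + sumL (seq (S s) n) g). cbv beta.
  destruct (Nat.eqb_spec s k) as [<-|Hsk].
  - rewrite sumL_zero; [ring|]. intros m Hm. apply in_seq in Hm.
    destruct (Nat.eqb_spec m s); [lia|ring].
  - rewrite IH by lia. ring.
Qed.

Lemma EKperp_inner_const p v : in_EKperp p v ->
  forall j, (- Z.of_nat p + 2 <= j <= -1)%Z -> v j = v (-1)%Z.
Proof.
  intros [_ Hperp] j Hj.
  destruct (Z.eq_dec j (-1)) as [->|Hj1]; [reflexivity|].
  set (k := Z.to_nat (- j)). replace j with (- Z.of_nat k)%Z by lia.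
  set (delta := fun m => if Nat.eqb m k then 1 else 0).
  assert (Hw : EK p (EK_comb delta (seq 2 (p - 3)))) by (exists delta; reflexivity).
  specialize (Hperp _ Hw).
  rewrite ip_EK_comb in Hperp by (intros m Hm; apply in_seq in Hm; lia).
  unfold delta in Hperp. rewrite (sumL_seq_delta (fun m => v (-1)%Z - v (- Z.of_nat m)%Z)) in Hperp
    by lia.
  lra.
Qed.

Lemma inner_const_EKperp p v c : in_l2 v ->
  (forall j, (- Z.of_nat p + 2 <= j <= -1)%Z -> v j = c) -> in_EKperp p v.
Proof.
  intros Hl2 Hc. split; [exact Hl2|]. intros w [coef Hw].
  rewrite (ip_ext v w (EK_comb coef (seq 2 (p - 3)))) by exact Hw.
  rewrite ip_EK_comb by (intros k Hk; apply in_seq in Hk; lia).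
  apply sumL_zero. intros k Hk. apply in_seq in Hk. rewrite !Hc by lia. ring.
Qed.

Lemma sigma_plus_root lam : 4 <= lam ->
  sigma_plus lam ^ 2 - (2 - lam) * sigma_plus lam + 1 = 0.
Proof.
  intros Hlam. unfold sigma_plus.
  assert (Hsq := sqrt_sqrt ((2 - lam) ^ 2 - 4) ltac:(nra)).
  set (r := sqrt _) in *. field_simplify. nra.
Qed.

Lemma sigma_plus_bounds lam : 4 < lam -> -1 < sigma_plus lam < 0.
Proof.
  intros Hlam. unfold sigma_plus.
  assert (Hsq := sqrt_sqrt ((2 - lam) ^ 2 - 4) ltac:(nra)).
  assert (Hpos := sqrt_pos ((2 - lam) ^ 2 - 4)).
  set (r := sqrt _) in *. split; nra.
Qed.

Lemma sigma_plus_abs lam : 4 < lam -> 0 < Rabs (sigma_plus lam) < 1.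
Proof.
  intros Hlam. pose proof (sigma_plus_bounds lam Hlam). rewrite Rabs_left by lra. lra.
Qed.

Lemma sigma_plus_increasing l1 l2 : 4 < l1 -> l1 < l2 -> sigma_plus l1 < sigma_plus l2.
Proof.
  intros H1 H12.
  assert (E1 := sigma_plus_root l1 ltac:(lra)). assert (B1 := sigma_plus_bounds l1 H1).
  assert (E2 := sigma_plus_root l2 ltac:(lra)). assert (B2 := sigma_plus_bounds l2 ltac:(lra)).
  set (s1 := sigma_plus l1) in *. set (s2 := sigma_plus l2) in *.
  (* s1 * E2 - s2 * E1 *)
  assert (Hid : s1 * s2 * (l2 - l1) = (s1 - s2) * (s1 * s2 - 1)) by nra.
  assert (0 < s1 * s2 < 1) by (split; nra).
  nra.
Qed.

Lemma is_lim_seq_0_of_sq (u : nat -> R) : is_lim_seq (fun n => u n ^ 2) 0 -> is_lim_seq u 0.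
Proof.
  intros Hsq. apply is_lim_seq_spec in Hsq. apply is_lim_seq_spec. intros eps.
  assert (Heps2 : 0 < eps ^ 2) by (pose proof (cond_pos eps); nra).
  destruct (Hsq (mkposreal _ Heps2)) as [N HN]. exists N. intros n Hn.
  specialize (HN n Hn). simpl in HN. rewrite Rminus_0_r in *.
  rewrite Rabs_right in HN by (apply Rle_ge, pow2_ge_0).
  pose proof (cond_pos eps). apply Rabs_lt_between. split; nra.
Qed.

Lemma is_lim_seq_pow_gt1 r x : 1 < Rabs r -> is_lim_seq (fun n => r ^ n * x) 0 -> x = 0.
Proof.
  intros Hr Hlim. destruct (Req_dec x 0) as [|Hx]; [assumption|exfalso].
  apply is_lim_seq_spec in Hlim.
  destruct (Hlim (mkposreal _ (Rabs_pos_lt x Hx))) as [N HN].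
  specialize (HN N (le_n N)). simpl in HN.
  rewrite Rminus_0_r, Rabs_mult, <- RPow_abs in HN.
  assert (1 <= Rabs r ^ N) by (apply pow_R1_Rle; lra).
  pose proof (Rabs_pos_lt x Hx). nra.
Qed.

Lemma recurrence_decaying_geometric (u : nat -> R) s t :
  s ^ 2 - t * s + 1 = 0 -> 0 < Rabs s < 1 ->
  (forall n, u (S (S n)) = t * u (S n) - u n) -> is_lim_seq u 0 ->
  forall n, u n = u 0%nat * s ^ n.
Proof.
  intros Hroot Hs Hrec Hlim.
  (* w is geometric with ratio t - s = 1 / s, of modulus > 1, so it tends to 0 only if w 0 = 0 *)
  assert (Hinv : s * (t - s) = 1) by nra.
  set (w := fun n => u (S n) - s * u n).
  assert (Hw : forall n, w n = (t - s) ^ n * w 0%nat).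
  { induction n as [|n IH]; [simpl; ring|].
    transitivity ((t - s) * w n).
    - unfold w. rewrite Hrec. replace (u n) with (s * (t - s) * u n) at 1 by (rewrite Hinv; ring).
      ring.
    - rewrite IH. simpl. ring. }
  assert (Hw0 : w 0%nat = 0).
  { apply (is_lim_seq_pow_gt1 (t - s)).
    - assert (Rabs s * Rabs (t - s) = 1) by (rewrite <- Rabs_mult, Hinv; apply Rabs_R1).
      nra.
    - apply (is_lim_seq_ext w); [exact Hw|].
      replace (Finite 0) with (Finite (0 - s * 0)) by (f_equal; ring).
      apply is_lim_seq_minus'; [exact (proj1 (is_lim_seq_incr_1 u 0) Hlim)|].
      exact (is_lim_seq_scal_l u s 0 Hlim). }
  induction n as [|n IH]; [simpl; ring|].
  assert (Hwn : w n = 0) by (rewrite Hw, Hw0; ring).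
  unfold w in Hwn. rewrite <- tech_pow_Rmult. rewrite IH in Hwn. lra.
Qed.

Definition profile (p : nat) (a b c s : R) (j : Z) : R :=
  if (0 <=? j)%Z then a * s ^ Z.to_nat j
  else if (j <=? - Z.of_nat p + 1)%Z then b * s ^ Z.to_nat (- Z.of_nat p + 1 - j)
  else c.

(* The eigenvalue equations of [profile p a b c (sigma_plus lam)] at the clique vertices 0,
   -p+1 and -1 (the equations on the paths hold automatically). *)
Definition clique_system (p : nat) (lam a b c : R) : Prop :=
  (1 - sigma_plus lam) * a + (a - b) + (INR p - 2) * (a - c) = lam * a /\
  (1 - sigma_plus lam) * b + (b - a) + (INR p - 2) * (b - c) = lam * b /\
  (c - a) + (c - b) = lam * c.

Lemma profile_right p a b c s n : profile p a b c s (Z.of_nat n) = a * s ^ n.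
Proof.
  unfold profile. destruct (Z.leb_spec 0 (Z.of_nat n)); [|lia]. rewrite Nat2Z.id. reflexivity.
Qed.

Lemma profile_left p a b c s n : (2 <= p)%nat ->
  profile p a b c s (- Z.of_nat p + 1 - Z.of_nat n) = b * s ^ n.
Proof.
  intros Hp. unfold profile. destruct (Z.leb_spec 0 (- Z.of_nat p + 1 - Z.of_nat n)); [lia|].
  destruct (Z.leb_spec (- Z.of_nat p + 1 - Z.of_nat n) (- Z.of_nat p + 1)); [|lia].
  replace (- Z.of_nat p + 1 - (- Z.of_nat p + 1 - Z.of_nat n))%Z with (Z.of_nat n) by lia.
  rewrite Nat2Z.id. reflexivity.
Qed.

Lemma profile_at_0 p a b c s : profile p a b c s 0 = a.
Proof. change 0%Z with (Z.of_nat 0). rewrite profile_right. ring. Qed.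

Lemma profile_at_left_end p a b c s : (2 <= p)%nat -> profile p a b c s (- Z.of_nat p + 1) = b.
Proof.
  intros Hp. rewrite <- (Z.sub_0_r (- Z.of_nat p + 1)), <- Nat2Z.inj_0, profile_left by exact Hp.
  ring.
Qed.

Lemma profile_inner p a b c s j : (- Z.of_nat p + 2 <= j <= -1)%Z -> profile p a b c s j = c.
Proof.
  intros Hj. unfold profile.
  destruct (Z.leb_spec 0 j), (Z.leb_spec j (- Z.of_nat p + 1)); lia || reflexivity.
Qed.

Lemma ex_series_geom_sq x s : Rabs s < 1 -> ex_series (fun n => (x * s ^ n) ^ 2).
Proof.
  intros Hs.
  assert (Hs2 : Rabs (s ^ 2) < 1) by (rewrite <- RPow_abs; pose proof (Rabs_pos s); nra).
  apply (ex_series_ext (fun n => x ^ 2 * (s ^ 2) ^ n)).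
  - intros n. rewrite <- pow_mult, Nat.mul_comm, pow_mult. symmetry. apply Rpow_mult_distr.
  - exact (ex_series_scal (x ^ 2) _ (ex_intro _ _ (is_series_geom _ Hs2))).
Qed.

Lemma profile_in_l2 p a b c s : (2 <= p)%nat -> Rabs s < 1 -> in_l2 (profile p a b c s).
Proof.
  intros Hp Hs. split.
  - apply (ex_series_ext (fun n => (a * s ^ n) ^ 2)); [|exact (ex_series_geom_sq a s Hs)].
    intros n. rewrite profile_right. reflexivity.
  - apply (ex_series_incr_n _ (p - 2)).
    apply (ex_series_ext (fun n => (b * s ^ n) ^ 2)); [|exact (ex_series_geom_sq b s Hs)].
    intros n. rewrite <- (profile_left p a b c s n Hp). do 2 f_equal. lia.
Qed.

Lemma sigma_plus_path_step lam x m : 4 <= lam ->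
  let s := sigma_plus lam in
  (x * s ^ S m - x * s ^ m) + (x * s ^ S m - x * s ^ S (S m)) = lam * (x * s ^ S m).
Proof.
  intros Hlam s. pose proof (sigma_plus_root lam Hlam) as Hroot. fold s in Hroot.
  simpl. transitivity (lam * (x * (s * s ^ m)) - x * s ^ m * (s ^ 2 - (2 - lam) * s + 1)); [ring|].
  rewrite Hroot. ring.
Qed.

Section ProfileEigen.

Variables (p : nat) (lam a b c : R).
Hypotheses (p_ge2 : (2 <= p)%nat) (lam_gt4 : 4 < lam).
Hypothesis Hsys : clique_system p lam a b c.

Let v := profile p a b c (sigma_plus lam).

Lemma Lap_profile i : Lap p v i = lam * v i.
Proof.
  destruct Hsys as (E0 & E1 & Ein).
  assert (Hinner : forall j, (- Z.of_nat p + 2 <= j <= -1)%Z -> v j = c)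
    by (intros; apply profile_inner; assumption).
  destruct (Z_le_gt_dec 1 i) as [Hi|Hi]; [|destruct (Z_le_gt_dec i (- Z.of_nat p)) as [Hi'|Hi']].
  - rewrite Lap_path by lia.
    replace i with (Z.of_nat (S (Z.to_nat i - 1))) by lia.
    replace (Z.of_nat (S (Z.to_nat i - 1)) - 1)%Z with (Z.of_nat (Z.to_nat i - 1)) by lia.
    replace (Z.of_nat (S (Z.to_nat i - 1)) + 1)%Z with (Z.of_nat (S (S (Z.to_nat i - 1)))) by lia.
    unfold v. rewrite !profile_right. apply sigma_plus_path_step. lra.
  - rewrite Lap_path by lia.
    set (m := Z.to_nat (- Z.of_nat p - i)).
    replace i with (- Z.of_nat p + 1 - Z.of_nat (S m))%Z by lia.
    replace (- Z.of_nat p + 1 - Z.of_nat (S m) - 1)%Z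
      with (- Z.of_nat p + 1 - Z.of_nat (S (S m)))%Z by lia.
    replace (- Z.of_nat p + 1 - Z.of_nat (S m) + 1)%Z
      with (- Z.of_nat p + 1 - Z.of_nat m)%Z by lia.
    unfold v. rewrite !profile_left by lia. rewrite Rplus_comm. apply sigma_plus_path_step. lra.
  - assert (Hv0 : v 0%Z = a) by apply profile_at_0.
    assert (Hv1 : v 1%Z = a * sigma_plus lam)
      by (unfold v; change 1%Z with (Z.of_nat 1); rewrite profile_right; ring).
    assert (HvP : v (- Z.of_nat p + 1)%Z = b) by (apply profile_at_left_end, p_ge2).
    assert (HvP1 : v (- Z.of_nat p)%Z = b * sigma_plus lam).
    { unfold v. replace (- Z.of_nat p)%Z with (- Z.of_nat p + 1 - Z.of_nat 1)%Z by lia.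
      rewrite profile_left by lia. ring. }
    destruct (Z.eq_dec i 0) as [->|Hi0];
      [rewrite (Lap_clique_right p v c ltac:(lia) Hinner), Hv0, Hv1, HvP; lra|].
    destruct (Z.eq_dec i (- Z.of_nat p + 1)) as [->|Hi1];
      [rewrite (Lap_clique_left p v c ltac:(lia) Hinner), Hv0, HvP1, HvP; lra|].
    rewrite (Lap_clique_inner p v c ltac:(lia) Hinner), Hv0, HvP, Hinner by lia. lra.
Qed.

Lemma profile_eigvec : a <> 0 -> is_eigvec p v lam /\ in_EKperp p v.
Proof.
  intros Ha.
  assert (Hl2 : in_l2 v).
  { apply profile_in_l2; [assumption|]. apply sigma_plus_abs, lam_gt4. }
  split; [split; [exact Hl2|split]|].
  - exists 0%Z. unfold v. rewrite profile_at_0. exact Ha.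
  - exact Lap_profile.
  - apply (inner_const_EKperp p v c Hl2). intros j Hj. apply profile_inner. exact Hj.
Qed.

End ProfileEigen.

Section EigenvectorShape.

Variables (p : nat) (v : vec) (lam : R).
Hypotheses (p_ge2 : (2 <= p)%nat) (lam_gt4 : 4 < lam).
Hypothesis v_eig : is_eigvec p v lam.

Lemma eigvec_right_tail n : v (Z.of_nat n) = v 0%Z * sigma_plus lam ^ n.
Proof.
  destruct v_eig as [[Hl2 _] [_ Heig]].
  apply (recurrence_decaying_geometric (fun n => v (Z.of_nat n)) _ (2 - lam)).
  - apply sigma_plus_root. lra.
  - apply sigma_plus_abs, lam_gt4.
  - intros m. pose proof (Lap_path p v (Z.of_nat (S m)) ltac:(lia) ltac:(lia)) as E.
    rewrite Heig in E.
    replace (Z.of_nat (S m) - 1)%Z with (Z.of_nat m) in E by lia.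
    replace (Z.of_nat (S m) + 1)%Z with (Z.of_nat (S (S m))) in E by lia. lra.
  - apply is_lim_seq_0_of_sq, ex_series_lim_0, Hl2.
Qed.

Lemma eigvec_left_tail n :
  v (- Z.of_nat p + 1 - Z.of_nat n)%Z = v (- Z.of_nat p + 1)%Z * sigma_plus lam ^ n.
Proof.
  destruct v_eig as [[_ Hl2] [_ Heig]].
  rewrite <- (Z.sub_0_r (- Z.of_nat p + 1)) at 2.
  apply (recurrence_decaying_geometric (fun n => v (- Z.of_nat p + 1 - Z.of_nat n)%Z) _ (2 - lam)).
  - apply sigma_plus_root. lra.
  - apply sigma_plus_abs, lam_gt4.
  - intros m.
    pose proof (Lap_path p v (- Z.of_nat p + 1 - Z.of_nat (S m)) ltac:(lia) ltac:(lia)) as E.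
    rewrite Heig in E.
    replace (- Z.of_nat p + 1 - Z.of_nat (S m) - 1)%Z
      with (- Z.of_nat p + 1 - Z.of_nat (S (S m)))%Z in E by lia.
    replace (- Z.of_nat p + 1 - Z.of_nat (S m) + 1)%Z
      with (- Z.of_nat p + 1 - Z.of_nat m)%Z in E by lia. lra.
  - apply is_lim_seq_0_of_sq. apply ex_series_lim_0 in Hl2.
    apply (is_lim_seq_incr_n _ (p - 2)) in Hl2.
    refine (is_lim_seq_ext _ _ _ _ Hl2). intros m. do 2 f_equal. lia.
Qed.

Lemma eigvec_symmetric : v (- Z.of_nat p + 1)%Z = v 0%Z -> symmetric p v.
Proof.
  intros Hends n Hn. replace n with (Z.of_nat (Z.to_nat n)) by lia.
  rewrite eigvec_left_tail, eigvec_right_tail, Hends. reflexivity.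
Qed.

Lemma eigvec_antisymmetric : v (- Z.of_nat p + 1)%Z = - v 0%Z -> antisymmetric p v.
Proof.
  intros Hends n Hn. replace n with (Z.of_nat (Z.to_nat n)) by lia.
  rewrite eigvec_left_tail, eigvec_right_tail, Hends. ring.
Qed.

Hypothesis v_perp : in_EKperp p v.

Lemma eigvec_profile j :
  v j = profile p (v 0%Z) (v (- Z.of_nat p + 1)%Z) (v (-1)%Z) (sigma_plus lam) j.
Proof.
  destruct (Z_le_gt_dec 0 j); [|destruct (Z_le_gt_dec j (- Z.of_nat p + 1))].
  - replace j with (Z.of_nat (Z.to_nat j)) by lia.
    rewrite profile_right. apply eigvec_right_tail.
  - replace j with (- Z.of_nat p + 1 - Z.of_nat (Z.to_nat (- Z.of_nat p + 1 - j)))%Z by lia.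
    rewrite profile_left by assumption. apply eigvec_left_tail.
  - rewrite profile_inner by lia. apply (EKperp_inner_const p v v_perp). lia.
Qed.

Lemma eigvec_clique_system : (3 <= p)%nat ->
  clique_system p lam (v 0%Z) (v (- Z.of_nat p + 1)%Z) (v (-1)%Z).
Proof.
  intros Hp.
  pose proof (EKperp_inner_const p v v_perp) as Hinner.
  pose proof (eigvec_right_tail 1) as R1. pose proof (eigvec_left_tail 1) as L1.
  change (Z.of_nat 1) with 1%Z in R1. rewrite pow_1 in R1, L1.
  replace (- Z.of_nat p + 1 - Z.of_nat 1)%Z with (- Z.of_nat p)%Z in L1 by lia.
  destruct v_eig as [_ [_ Heig]].
  pose proof (Lap_clique_right p v _ p_ge2 Hinner) as E0.
  pose proof (Lap_clique_left p v _ p_ge2 Hinner) as E1.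
  pose proof (Lap_clique_inner p v _ p_ge2 Hinner (-1) ltac:(lia)) as Ein.
  rewrite Heig in E0, E1, Ein. rewrite R1 in E0. rewrite L1 in E1.
  unfold clique_system. repeat split; lra.
Qed.

End EigenvectorShape.

Lemma clique_system_factor p lam a b c : clique_system p lam a b c ->
  (a - b) * F_A p lam = 0 /\ c * F_S p lam = 0 /\ (2 - lam) * c = a + b.
Proof.
  unfold clique_system, F_A, F_S. set (s := sigma_plus lam). intros (E0 & E1 & Ein).
  assert (Hsum : (2 - lam) * c = a + b) by lra.
  split; [|split; [|exact Hsum]].
  - lra.
  - assert (Hc : (a + b) * (INR p - 1 - s - lam) = 2 * (INR p - 2) * c) by lra.
    rewrite <- Hsum in Hc. lra.
Qed.

Definition lambda_A (p : nat) : R := INR p + 1 + / (INR p - 1).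

Lemma lambda_A_bounds p : (3 <= p)%nat -> INR p + 1 < lambda_A p < INR p + 2.
Proof.
  intros Hp. pose proof (le_INR 3 p Hp) as HP. simpl in HP. unfold lambda_A.
  assert (0 < / (INR p - 1) < 1).
  { split; [apply Rinv_0_lt_compat; lra|]. rewrite <- Rinv_1. apply Rinv_1_lt_contravar; lra. }
  lra.
Qed.

Lemma F_A_eq0 p lam : (3 <= p)%nat -> 4 < lam -> F_A p lam = 0 <-> lam = lambda_A p.
Proof.
  intros Hp Hlam. pose proof (le_INR 3 p Hp) as HP. simpl in HP.
  pose proof (sigma_plus_root lam ltac:(lra)) as Hroot.
  pose proof (sigma_plus_bounds lam Hlam) as Hs.
  unfold F_A, lambda_A. set (s := sigma_plus lam) in *.
  (* with lam = p + 1 - s the quadratic becomes (p - 1) s + 1 = 0 *)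
  split; intros H.
  - assert (Hlin : (INR p - 1) * s + 1 = 0)
      by (replace lam with (INR p + 1 - s) in Hroot by lra; nra).
    replace s with (- / (INR p - 1)) in H by (field_simplify_eq; lra).
    lra.
  - assert (Hfac : (s + / (INR p - 1)) * (s + (INR p - 1)) = 0).
    { rewrite <- Hroot, H. field. lra. }
    apply Rmult_integral in Hfac. destruct Hfac as [Hfac|Hfac]; [|lra].
    rewrite H. lra.
Qed.

Lemma F_A_roots p : (5 <= p)%nat ->
  (exists! lam, INR p < lam < INR p + 2 /\ F_A p lam = 0) /\
  (forall lam, (4 < lam <= INR p \/ INR p + 2 <= lam) -> F_A p lam <> 0).
Proof.
  intros Hp. pose proof (le_INR 5 p Hp) as HP. simpl in HP.
  pose proof (lambda_A_bounds p ltac:(lia)) as HA.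
  split.
  - exists (lambda_A p). split; [split; [lra|apply F_A_eq0; lia || lra]|].
    intros lam [Hlam Hf]. symmetry. apply (F_A_eq0 p lam); lia || lra.
  - intros lam Hlam Hf. apply F_A_eq0 in Hf; lia || lra.
Qed.

Definition F_S_reduced (p : nat) (lam : R) : R :=
  sigma_plus lam - (INR p - 1 - lam) - 2 * (INR p - 2) / (lam - 2).

Lemma F_S_factor p lam : 2 < lam -> F_S p lam = (2 - lam) * F_S_reduced p lam.
Proof. intros Hlam. unfold F_S, F_S_reduced. field. lra. Qed.

Lemma F_S_reduced_increasing p l1 l2 : (2 <= p)%nat -> 4 < l1 -> l1 < l2 ->
  F_S_reduced p l1 < F_S_reduced p l2.
Proof.
  intros Hp H1 H12. pose proof (le_INR 2 p Hp) as HP. simpl in HP.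
  pose proof (sigma_plus_increasing l1 l2 H1 H12). unfold F_S_reduced.
  assert (2 * (INR p - 2) / (l2 - 2) <= 2 * (INR p - 2) / (l1 - 2)).
  { unfold Rdiv. apply Rmult_le_compat_l; [lra|]. apply Rlt_le, Rinv_lt_contravar; nra. }
  lra.
Qed.

Lemma F_S_reduced_at_p p : (5 <= p)%nat -> F_S_reduced p (INR p) < 0.
Proof.
  intros Hp. pose proof (le_INR 5 p Hp) as HP. simpl in HP.
  pose proof (sigma_plus_bounds (INR p) ltac:(lra)).
  unfold F_S_reduced. replace (2 * (INR p - 2) / (INR p - 2)) with 2 by (field; lra). lra.
Qed.

Lemma F_S_reduced_at_p2 p : (3 <= p)%nat -> 0 < F_S_reduced p (INR p + 2).
Proof.
  intros Hp. pose proof (le_INR 3 p Hp) as HP. simpl in HP.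
  pose proof (sigma_plus_bounds (INR p + 2) ltac:(lra)).
  unfold F_S_reduced. replace (INR p + 2 - 2) with (INR p) by ring.
  assert (2 * (INR p - 2) / INR p < 2).
  { apply (Rmult_lt_reg_r (INR p)); [lra|]. unfold Rdiv. rewrite Rmult_assoc, Rinv_l by lra. lra. }
  lra.
Qed.

Lemma F_S_continuous p lam : 4 < lam -> continuity_pt (F_S p) lam.
Proof. intros Hlam. unfold F_S, sigma_plus. reg. nra. Qed.

Lemma F_S_eq0 p lam : 2 < lam -> F_S p lam = 0 <-> F_S_reduced p lam = 0.
Proof.
  intros Hlam. rewrite F_S_factor by exact Hlam. split; intros H.
  - apply Rmult_integral in H. destruct H; [lra|assumption].
  - rewrite H. ring.
Qed.

Lemma F_S_roots p : (5 <= p)%nat ->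
  (exists! lam, INR p < lam < INR p + 2 /\ F_S p lam = 0) /\
  (forall lam, (4 < lam <= INR p \/ INR p + 2 <= lam) -> F_S p lam <> 0).
Proof.
  intros Hp. pose proof (le_INR 5 p Hp) as HP. simpl in HP.
  pose proof (F_S_reduced_at_p p Hp) as Hlo. pose proof (F_S_reduced_at_p2 p ltac:(lia)) as Hhi.
  assert (Hmono : forall l1 l2, 4 < l1 -> l1 <= l2 -> F_S_reduced p l1 <= F_S_reduced p l2).
  { intros l1 l2 H1 H12. destruct (Rle_lt_or_eq_dec _ _ H12) as [Hlt|<-]; [|lra].
    apply Rlt_le, F_S_reduced_increasing; [lia|lra|lra]. }
  split.
  - destruct (Ranalysis5.IVT_interv (fun x => - F_S p x) (INR p) (INR p + 2)) as [z [Hz Hfz]].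
    + intros x Hx. apply continuity_pt_opp, F_S_continuous. lra.
    + lra.
    + rewrite F_S_factor by lra. nra.
    + rewrite F_S_factor by lra. nra.
    + assert (Hz0 : F_S_reduced p z = 0) by (apply F_S_eq0; lra).
      assert (Hzp : INR p < z < INR p + 2).
      { split; apply Rnot_le_lt; intros Hle.
        - pose proof (Hmono z (INR p) ltac:(lra) Hle). lra.
        - pose proof (Hmono (INR p + 2) z ltac:(lra) Hle). lra. }
      exists z. split; [split; [exact Hzp|apply F_S_eq0; lra]|].
      intros x [Hx Hfx]. apply F_S_eq0 in Hfx; [|lra].
      destruct (Rtotal_order z x) as [Hlt|[Heq|Hlt]]; [|exact Heq|].
      * pose proof (F_S_reduced_increasing p z x ltac:(lia) ltac:(lra) Hlt). lra.
      * pose proof (F_S_reduced_increasing p x z ltac:(lia) ltac:(lra) Hlt). lra.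
  - intros lam Hlam Hf. apply F_S_eq0 in Hf; [|lra]. destruct Hlam as [Hlam|Hlam].
    + pose proof (Hmono lam (INR p) ltac:(lra) ltac:(lra)). lra.
    + pose proof (Hmono (INR p + 2) lam ltac:(lra) Hlam). lra.
Qed.

Lemma F_A_F_S_no_common_root p lam : (3 <= p)%nat -> 4 < lam ->
  F_A p lam = 0 -> F_S p lam <> 0.
Proof.
  intros Hp Hlam HA. pose proof (lambda_A_bounds p Hp).
  assert (lam = lambda_A p) by (apply F_A_eq0; assumption).
  unfold F_A in HA. unfold F_S. replace (sigma_plus lam) with (INR p + 1 - lam) by lra.
  replace ((2 - lam) * (INR p + 1 - lam) - (INR p - 1 - lam) * (2 - lam) + 2 * (INR p - 2))
    with (2 * (INR p - lam)) by ring.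
  lra.
Qed.

Lemma clique_system_of_F_S p lam : lam <> 2 -> F_S p lam = 0 ->
  clique_system p lam 1 1 (2 / (2 - lam)).
Proof.
  intros Hlam HS.
  assert (Hc : (2 - lam) * (2 / (2 - lam)) = 2) by (field; lra).
  set (c := 2 / (2 - lam)) in *.
  assert (E : (1 - sigma_plus lam) * 1 + (1 - 1) + (INR p - 2) * (1 - c) = lam * 1).
  { apply (Rmult_eq_reg_l (2 - lam)); [|lra].
    transitivity (lam * (2 - lam) - F_S p lam + (INR p - 2) * (2 - (2 - lam) * c));
      [unfold F_S; ring|].
    rewrite HS, Hc. ring. }
  unfold clique_system. repeat split; lra.
Qed.

Lemma clique_system_of_F_A p lam : F_A p lam = 0 -> clique_system p lam 1 (-1) 0.
Proof. unfold F_A, clique_system. intros HA. repeat split; lra. Qed.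

Section Eigenvectors.

Variables (p : nat) (lam : R).
Hypotheses (p_ge3 : (3 <= p)%nat) (lam_gt4 : 4 < lam).

Lemma eigvec_ends_nonzero v : is_eigvec p v lam -> in_EKperp p v ->
  ~ (v 0%Z = 0 /\ v (- Z.of_nat p + 1)%Z = 0 /\ v (-1)%Z = 0).
Proof.
  intros Heig Hperp (H0 & H1 & H2).
  pose proof Heig as [_ [[i Hi] _]]. apply Hi.
  rewrite (eigvec_profile p v lam ltac:(lia) lam_gt4 Heig Hperp i), H0, H1, H2.
  unfold profile. destruct (0 <=? i)%Z, (i <=? - Z.of_nat p + 1)%Z; ring.
Qed.

Lemma eigvec_equations v : is_eigvec p v lam -> in_EKperp p v ->
  (v 0%Z - v (- Z.of_nat p + 1)%Z) * F_A p lam = 0 /\ v (-1)%Z * F_S p lam = 0 /\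
  (2 - lam) * v (-1)%Z = v 0%Z + v (- Z.of_nat p + 1)%Z.
Proof.
  intros Heig Hperp. apply clique_system_factor.
  exact (eigvec_clique_system p v lam ltac:(lia) lam_gt4 Heig Hperp p_ge3).
Qed.

Lemma eigvec_symmetric_or_antisymmetric v : is_eigvec p v lam -> in_EKperp p v ->
  symmetric p v \/ antisymmetric p v.
Proof.
  intros Heig Hperp. destruct (eigvec_equations v Heig Hperp) as (HA & HS & Hsum).
  destruct (Req_dec (F_A p lam) 0) as [FA|FA].
  - right. apply (eigvec_antisymmetric p v lam ltac:(lia) lam_gt4 Heig).
    pose proof (F_A_F_S_no_common_root p lam p_ge3 lam_gt4 FA).
    assert (v (-1)%Z = 0) by (apply Rmult_integral in HS; tauto).
    nra.
  - left. apply (eigvec_symmetric p v lam ltac:(lia) lam_gt4 Heig).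
    apply Rmult_integral in HA. destruct HA; [lra|contradiction].
Qed.

Lemma symmetric_eigvec_F_S v : is_eigvec p v lam -> in_EKperp p v -> symmetric p v ->
  F_S p lam = 0.
Proof.
  intros Heig Hperp Hsym. destruct (eigvec_equations v Heig Hperp) as (_ & HS & Hsum).
  pose proof (Hsym 0%Z (Z.le_refl 0)) as Hends. rewrite Z.sub_0_r in Hends.
  apply Rmult_integral in HS. destruct HS as [Hc|]; [exfalso|assumption].
  apply (eigvec_ends_nonzero v Heig Hperp). nra.
Qed.

Lemma antisymmetric_eigvec_F_A v : is_eigvec p v lam -> in_EKperp p v -> antisymmetric p v ->
  F_A p lam = 0.
Proof.
  intros Heig Hperp Hanti. destruct (eigvec_equations v Heig Hperp) as (HA & _ & Hsum).
  pose proof (Hanti 0%Z (Z.le_refl 0)) as Hends. rewrite Z.sub_0_r in Hends.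
  apply Rmult_integral in HA. destruct HA as [Hab|]; [exfalso|assumption].
  apply (eigvec_ends_nonzero v Heig Hperp). nra.
Qed.

Lemma F_S_symmetric_eigvec : F_S p lam = 0 ->
  exists v, is_eigvec p v lam /\ in_EKperp p v /\ symmetric p v.
Proof.
  intros HS. pose proof (clique_system_of_F_S p lam ltac:(lra) HS) as Hsys.
  set (v := profile p 1 1 (2 / (2 - lam)) (sigma_plus lam)).
  destruct (profile_eigvec p lam 1 1 _ ltac:(lia) lam_gt4 Hsys R1_neq_R0) as [Heig Hperp].
  exists v. split; [exact Heig|split; [exact Hperp|]].
  apply (eigvec_symmetric p v lam ltac:(lia) lam_gt4 Heig).
  unfold v. rewrite profile_at_left_end, profile_at_0 by lia. reflexivity.
Qed.

Lemma F_A_antisymmetric_eigvec : F_A p lam = 0 ->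
  exists v, is_eigvec p v lam /\ in_EKperp p v /\ antisymmetric p v.
Proof.
  intros HA. pose proof (clique_system_of_F_A p lam HA) as Hsys.
  set (v := profile p 1 (-1) 0 (sigma_plus lam)).
  destruct (profile_eigvec p lam 1 (-1) 0 ltac:(lia) lam_gt4 Hsys R1_neq_R0) as [Heig Hperp].
  exists v. split; [exact Heig|split; [exact Hperp|]].
  apply (eigvec_antisymmetric p v lam ltac:(lia) lam_gt4 Heig).
  unfold v. rewrite profile_at_left_end, profile_at_0 by lia. reflexivity.
Qed.

End Eigenvectors.


Theorem proposition11 (p : nat) (Hp : (5 <= p)%nat) :
  (* (i) *)
  (forall (v : vec) (lam : R), 4 < lam -> is_eigvec p v lam -> in_EKperp p v ->
     symmetric p v \/ antisymmetric p v) /\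
  (* (ii) *)
  (forall lam : R, 4 < lam ->
     ((exists v : vec, is_eigvec p v lam /\ in_EKperp p v /\ symmetric p v)
      <-> F_S p lam = 0)) /\
  (* (iii) *)
  (forall lam : R, 4 < lam ->
     ((exists v : vec, is_eigvec p v lam /\ in_EKperp p v /\ antisymmetric p v)
      <-> F_A p lam = 0)) /\
  (* (iv) *)
  ((exists! lam : R, INR p < lam < INR p + 2 /\ F_A p lam = 0) /\
   (forall lam : R, (4 < lam <= INR p \/ INR p + 2 <= lam) -> F_A p lam <> 0)) /\
  ((exists! lam : R, INR p < lam < INR p + 2 /\ F_S p lam = 0) /\
   (forall lam : R, (4 < lam <= INR p \/ INR p + 2 <= lam) -> F_S p lam <> 0)).
Proof.
  assert (Hp3 : (3 <= p)%nat) by lia.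
  split; [|split; [|split; [|split]]].
  - intros v lam Hlam. exact (eigvec_symmetric_or_antisymmetric p lam Hp3 Hlam v).
  - intros lam Hlam. split.
    + intros (v & Heig & Hperp & Hsym).
      exact (symmetric_eigvec_F_S p lam Hp3 Hlam v Heig Hperp Hsym).
    + exact (F_S_symmetric_eigvec p lam Hp3 Hlam).
  - intros lam Hlam. split.
    + intros (v & Heig & Hperp & Hanti).
      exact (antisymmetric_eigvec_F_A p lam Hp3 Hlam v Heig Hperp Hanti).
    + exact (F_A_antisymmetric_eigvec p lam Hp3 Hlam).
  - exact (F_A_roots p Hp).
  - exact (F_S_roots p Hp).
Qed.
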